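(* Let $a$ and $b$ be coprime odd integers, let $\beta$ be a non-negative integer, and let $c$ and $d$ be odd positive integers. Then: 1) If $cd\in G_{(a,b)}(\beta)$, then $c\in G_{(a,b)}(\beta)$ and $d\in G_{(a,b)}(\beta)$. 2) If $\beta\geq2$, then $cd\in G_{(a,b)}(\beta)$ if and only if $c\in G_{(a,b)}(\beta)$ and $d\in G_{(a,b)}(\beta)$.
   Context: For coprime nonzero integers $a,b$ and an integer $\beta\geq0$, $G_{(a,b)}(\beta)$ is the set of positive integers $d$ such that $2^\beta d\mid(a^k+b^k)$ for some positive integer $k$. *)

From Stdlib Require Import ZArith Znumtheory.
Open Scope Z_scope.

Definition inG (a b : Z) (beta : nat) (d : Z) : Prop :=
  0 < d /\ exists k : nat, (1 <= k)%nat /\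
    (2 ^ Z.of_nat beta * d | a ^ Z.of_nat k + b ^ Z.of_nat k).

(* For odd [e], [x + y] divides [x^e + y^e] with cofactor congruent to
   [e x^(e-1)] modulo [x + y]; so if [d] is odd and divides [x + y], then
   [(x + y) d] divides [x^d + y^d].  For odd [a], [b] and even [k],
   [a^k + b^k = 2 (mod 4)], so when [beta >= 2] every exponent witnessing
   membership in [G(beta)] is odd.  Witnesses [k1] for [c] and [k2] for [d]
   then give the common exponent [k1 k2], and [k1 k2 d] witnesses [c d]. *)

From Stdlib Require Import ZArith Znumtheory Lia.
Open Scope Z_scope.

Lemma pow_sub_pow_opp_factor (x y n : Z) : 0 <= n ->
  exists s, x ^ (n + 1) - (- y) ^ (n + 1) = (x + y) * s /\
            (x + y | s - (n + 1) * x ^ n).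
Proof.
  revert n; apply natlike_ind.
  - exists 1; rewrite Z.add_0_l, !Z.pow_1_r, Z.pow_0_r, Z.sub_diag.
    split; [ring | apply Z.divide_0_r].
  - intros n Hn [s [Hs Hdiv]].
    exists (x * s + (- y) ^ (n + 1)).
    unfold Z.succ; rewrite !(Z.pow_add_r _ (n + 1) 1), !Z.pow_1_r by lia.
    assert (Hx : x ^ (n + 1) = x * x ^ n) by (rewrite Z.pow_add_r, Z.pow_1_r by lia; ring).
    rewrite Hx in Hs |- *.
    assert (Hy : (- y) ^ (n + 1) = x * x ^ n - (x + y) * s) by lia.
    rewrite Hy; split; [ring|].
    replace (x * s + (x * x ^ n - (x + y) * s) - (n + 1 + 1) * (x * x ^ n))
      with (x * (s - (n + 1) * x ^ n) - (x + y) * s) by ring.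
    apply Z.divide_sub_r; [now apply Z.divide_mul_r | apply Z.divide_factor_l].
Qed.

Lemma pow_add_pow_odd_factor (x y e : Z) : 0 < e -> Z.odd e = true ->
  exists s, x ^ e + y ^ e = (x + y) * s /\ (x + y | s - e * x ^ (e - 1)).
Proof.
  intros He Hodd.
  destruct (pow_sub_pow_opp_factor x y (e - 1)) as [s [Hs Hdiv]]; [lia|].
  rewrite Z.sub_add, Z.pow_opp_odd in Hs by now apply Z.odd_spec.
  exists s; split; [lia|].
  now rewrite Z.sub_add in Hdiv.
Qed.

Lemma add_divide_pow_add_pow_odd (x y e : Z) : 0 < e -> Z.odd e = true ->
  (x + y | x ^ e + y ^ e).
Proof.
  intros He Hodd; destruct (pow_add_pow_odd_factor x y e He Hodd) as [s [Hs _]].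
  rewrite Hs; apply Z.divide_factor_l.
Qed.

Lemma mul_add_divide_pow_add_pow_odd (x y e : Z) : 0 < e -> Z.odd e = true ->
  (e | x + y) -> ((x + y) * e | x ^ e + y ^ e).
Proof.
  intros He Hodd He_xy.
  destruct (pow_add_pow_odd_factor x y e He Hodd) as [s [Hs Hdiv]].
  rewrite Hs; apply Z.mul_divide_mono_l.
  replace s with (s - e * x ^ (e - 1) + e * x ^ (e - 1)) by ring.
  apply Z.divide_add_r; [now apply Z.divide_trans with (x + y) | apply Z.divide_factor_l].
Qed.

Lemma divide_pow_add_pow_mul_odd (m a b k e : Z) : 0 <= k -> 0 < e -> Z.odd e = true ->
  (m | a ^ k + b ^ k) -> (m | a ^ (k * e) + b ^ (k * e)).
Proof.
  intros Hk He Hodd Hm.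
  rewrite !Z.pow_mul_r by lia.
  now apply Z.divide_trans with (a ^ k + b ^ k); [|apply add_divide_pow_add_pow_odd].
Qed.

Lemma not_four_divide_sqr_add_sqr_odd (u v : Z) : Z.odd u = true -> Z.odd v = true ->
  ~ (4 | u * u + v * v).
Proof.
  intros [m ->]%Z.odd_spec [n ->]%Z.odd_spec [q Hq].
  assert (q * 4 = 4 * (m * m + m + n * n + n) + 2) by (rewrite <- Hq; ring).
  lia.
Qed.

Lemma odd_of_four_divide_pow_add_pow (a b k : Z) : Z.odd a = true -> Z.odd b = true ->
  0 <= k -> (4 | a ^ k + b ^ k) -> Z.odd k = true.
Proof.
  intros Ha Hb Hk H4.
  destruct (Z.odd k) eqn:Hodd; [reflexivity|exfalso].
  assert (Heven : Z.even k = true) by now rewrite <- Z.negb_odd, Hodd.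
  apply Z.even_spec in Heven as [j ->].
  assert (Hpow_odd : forall u, Z.odd u = true -> Z.odd (u ^ j) = true).
  { intros u Hu; destruct (Z.eq_dec j 0) as [->|]; [reflexivity|].
    rewrite Z.odd_pow by lia; exact Hu. }
  rewrite (Z.mul_comm 2 j), !Z.pow_mul_r, !Z.pow_2_r in H4 by lia.
  exact (not_four_divide_sqr_add_sqr_odd _ _ (Hpow_odd a Ha) (Hpow_odd b Hb) H4).
Qed.

Lemma inGE (a b : Z) (beta : nat) (d : Z) :
  inG a b beta d <->
  0 < d /\ exists k, 0 < k /\ (2 ^ Z.of_nat beta * d | a ^ k + b ^ k).
Proof.
  split.
  - intros [Hd [k [Hk Hdiv]]]; split; [exact Hd|].
    exists (Z.of_nat k); split; [lia | exact Hdiv].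
  - intros [Hd [k [Hk Hdiv]]]; split; [exact Hd|].
    exists (Z.to_nat k); split; [lia|]. now rewrite Z2Nat.id by lia.
Qed.

Lemma inG_divide (a b : Z) (beta : nat) (d e : Z) :
  0 < d -> (d | e) -> inG a b beta e -> inG a b beta d.
Proof.
  intros Hd Hde [_ [k [Hk Hdiv]]]; split; [exact Hd|].
  exists k; split; [exact Hk|].
  apply Z.divide_trans with (2 ^ Z.of_nat beta * e); [|exact Hdiv].
  now apply Z.mul_divide_mono_l.
Qed.

Lemma inG_exponent_odd (a b : Z) (beta : nat) (m k : Z) :
  Z.odd a = true -> Z.odd b = true -> (2 <= beta)%nat -> 0 < k ->
  (2 ^ Z.of_nat beta * m | a ^ k + b ^ k) -> Z.odd k = true.
Proof.
  intros Ha Hb Hbeta Hk Hdiv.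
  apply (odd_of_four_divide_pow_add_pow a b); [exact Ha | exact Hb | lia|].
  apply Z.divide_trans with (2 ^ Z.of_nat beta * m); [|exact Hdiv].
  apply Z.divide_mul_l.
  replace (Z.of_nat beta) with (2 + (Z.of_nat beta - 2)) by lia.
  rewrite Z.pow_add_r by lia; apply Z.divide_factor_l.
Qed.

Lemma inG_mul (a b : Z) (beta : nat) (c d : Z) :
  Z.odd a = true -> Z.odd b = true -> (2 <= beta)%nat -> Z.odd d = true ->
  inG a b beta c -> inG a b beta d -> inG a b beta (c * d).
Proof.
  intros Ha Hb Hbeta Hd_odd.
  rewrite !inGE; intros [Hc [k1 [Hk1 H1]]] [Hd [k2 [Hk2 H2]]].
  pose proof (inG_exponent_odd a b beta c k1 Ha Hb Hbeta Hk1 H1) as Hodd1.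
  pose proof (inG_exponent_odd a b beta d k2 Ha Hb Hbeta Hk2 H2) as Hodd2.
  set (x := a ^ (k1 * k2)); set (y := b ^ (k1 * k2)).
  assert (Hc_xy : (2 ^ Z.of_nat beta * c | x + y))
    by (apply divide_pow_add_pow_mul_odd; auto; lia).
  assert (Hd_xy : (d | x + y)).
  { apply Z.divide_trans with (2 ^ Z.of_nat beta * d); [apply Z.divide_factor_r|].
    unfold x, y; rewrite (Z.mul_comm k1 k2).
    apply divide_pow_add_pow_mul_odd; auto; lia. }
  split; [lia|]; exists (k1 * k2 * d); split; [nia|].
  rewrite !(Z.pow_mul_r _ (k1 * k2) d), Z.mul_assoc by nia.
  apply Z.divide_trans with ((x + y) * d).
  - now apply Z.mul_divide_mono_r.
  - now apply mul_add_divide_pow_add_pow_odd.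
Qed.

Theorem proposition2p11 (a b : Z) (beta : nat) (c d : Z) :
  Z.gcd a b = 1 -> Z.odd a = true -> Z.odd b = true ->
  Z.odd c = true -> 0 < c -> Z.odd d = true -> 0 < d ->
  (inG a b beta (c * d) -> inG a b beta c /\ inG a b beta d) /\
  ((2 <= beta)%nat -> (inG a b beta (c * d) <-> inG a b beta c /\ inG a b beta d)).
Proof.
  intros _ Ha Hb _ Hc Hd_odd Hd.
  assert (Hdivisors : inG a b beta (c * d) -> inG a b beta c /\ inG a b beta d).
  { intros Hcd; split.
    - exact (inG_divide a b beta c (c * d) Hc (Z.divide_factor_l c d) Hcd).
    - exact (inG_divide a b beta d (c * d) Hd (Z.divide_factor_r d c) Hcd). }
  split; [exact Hdivisors|].
  intros Hbeta; split; [exact Hdivisors|].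
  intros [HGc HGd]; now apply inG_mul.
Qed.
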